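(* Let $\lambda>0$, $X\in\mathbb R^{\mathbf m\times\mathbf n}$, and define on $\mathbb R^{\mathbf m\times\mathbf r}\times\mathbb R^{\mathbf r\times\mathbf n}$ $$f(U,V)=\tfrac12\|X-UV\|_F^2+\tfrac{\lambda}{2}\|I_{\mathbf r}-VV^\top\|_F^2,\quad \varphi_1(U,V)=\tfrac12\|U\|_F^2,\quad \varphi_2(U,V)=\tfrac{6\lambda}{4}\|V\|_F^4+\tfrac12\varepsilon(U)\|V\|_F^2,$$ with $\varepsilon(U)=\max\{\|U^\top U\|,2\lambda\}$ ($\|\cdot\|$ the spectral norm). (1) For any $\bar U\in\mathbb R^{\mathbf m\times\mathbf r}$, $V\in\mathbb R^{\mathbf r\times\mathbf n}$ and $L_1>0$, $$\arg\min_{U\ge0}\Big\{\langle\nabla_Uf(\bar U,V),U\rangle+L_1D_{\varphi_1(\cdot,V)}(U,\bar U)\Big\}=\max\Big(\bar U-\tfrac1{L_1}\big(\bar UVV^\top-XV^\top\big),0\Big).$$ (2) For any $\bar V\in\mathbb R^{\mathbf r\times\mathbf n}$, $U\in\mathbb R^{\mathbf m\times\mathbf r}$ and $L_2>0$, $$\arg\min_{V\ge0}\Big\{\langle\nabla_Vf(U,\bar V),V\rangle+L_2D_{\varphi_2(U,\cdot)}(V,\bar V)\Big\}=\tfrac1\rho\max(G(\bar V),0),$$ where $$G(\bar V)=\nabla_V\varphi_2(U,\bar V)-\tfrac1{L_2}\nabla_Vf(U,\bar V)=(6\lambda\|\bar V\|_F^2+\varepsilon(U))\bar V-\tfrac1{L_2}\big(U^\top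 U\bar V-U^\top X+2\lambda(\bar V\bar V^\top\bar V-\bar V)\big),$$ and $\rho$ is the unique real solution of $\rho^2(\rho-a)=c$ with $a=\varepsilon(U)$ and $c=6\lambda\|\max(G(\bar V),0)\|_F^2$, which is given in closed form by $$\rho=\frac a3+\sqrt[3]{\frac{c+\sqrt\Delta}{2}+\frac{a^3}{27}}+\sqrt[3]{\frac{c-\sqrt\Delta}{2}+\frac{a^3}{27}},\qquad \Delta=c^2+\tfrac4{27}ca^3.$$
   Context: Inner products are Frobenius (trace) inner products; $U\ge0$, $V\ge0$ denote entrywise nonnegativity; $\max(\cdot,0)$ is taken entrywise. For a differentiable convex $\psi$, the Bregman divergence is $D_\psi(x,y)=\psi(x)-\psi(y)-\langle\nabla\psi(y),x-y\rangle$; here $D_{\varphi_1(\cdot,V)}$ is the divergence of $U\mapsto\varphi_1(U,V)$ and $D_{\varphi_2(U,\cdot)}$ that of $V\mapsto\varphi_2(U,V)$. *)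

From HB Require Import structures.
From mathcomp Require Import all_boot all_order all_algebra.
From mathcomp Require Import all_classical all_reals all_analysis.
Set Implicit Arguments. Unset Strict Implicit. Unset Printing Implicit Defensive.
Import Order.TTheory GRing.Theory Num.Theory.
Local Open Scope ring_scope.
Local Open Scope classical_set_scope.

Section Defs.
Variable R : realType.

Definition frob (p q : nat) (A B : 'M[R]_(p, q)) : R :=
  \sum_(i < p) \sum_(j < q) A i j * B i j.

Definition fnorm (p q : nat) (A : 'M[R]_(p, q)) : R := Num.sqrt (frob A A).

Definition specnorm (p q : nat) (A : 'M[R]_(p, q)) : R :=
  sup [set fnorm (A *m x) | x in [set x : 'cV[R]_q | fnorm x <= 1]].

Definition mx_nonneg (p q : nat) (A : 'M[R]_(p, q)) : Prop :=
  forall i j, 0 <= A i j.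
Definition mx_pos (p q : nat) (A : 'M[R]_(p, q)) : 'M[R]_(p, q) :=
  map_mx (fun x => Num.max x 0) A.

Definition grad (p q : nat) (psi : 'M[R]_(p, q) -> R) (Y : 'M[R]_(p, q))
  : 'M[R]_(p, q) :=
  \matrix_(i, j) derive1 (fun t : R => psi (Y + t *: delta_mx i j)) 0.

Definition bregman (p q : nat) (psi : 'M[R]_(p, q) -> R) (x y : 'M[R]_(p, q))
  : R := psi x - psi y - frob (grad psi y) (x - y).

Definition argmin_nonneg (p q : nat) (obj : 'M[R]_(p, q) -> R)
  : set 'M[R]_(p, q) :=
  [set Z | mx_nonneg Z /\ forall W, mx_nonneg W -> obj Z <= obj W].

Definition cbrt (x : R) : R :=
  if 0 <= x then x `^ (3%:R)^-1 else - ((- x) `^ (3%:R)^-1).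

Definition fobj (m r n : nat) (lam : R) (X : 'M[R]_(m, n))
  (U : 'M[R]_(m, r)) (V : 'M[R]_(r, n)) : R :=
  2^-1 * fnorm (X - U *m V) ^+ 2
  + lam / 2 * fnorm (1%:M - V *m V^T) ^+ 2.

Definition eps (m r : nat) (lam : R) (U : 'M[R]_(m, r)) : R :=
  Num.max (specnorm (U^T *m U)) (2 * lam).

Definition phi1 (m r n : nat) (U : 'M[R]_(m, r)) (V : 'M[R]_(r, n)) : R :=
  2^-1 * fnorm U ^+ 2.

Definition phi2 (m r n : nat) (lam : R) (U : 'M[R]_(m, r)) (V : 'M[R]_(r, n))
  : R :=
  (6%:R * lam) / 4%:R * fnorm V ^+ 4 + 2^-1 * eps lam U * fnorm V ^+ 2.

End Defs.

(* By the three-point identity, a nonnegative Z is the unique minimiser once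
   the kernel psi is strongly convex and grad psi Z = max(Y, 0) for
   Y = grad psi Vbar - grad f / L (the obtuse-angle criterion of this
   projection is all that is used).  For phi1, grad psi is the identity.  For
   phi2 it is V |-> (6 lam |V|^2 + eps) V, so Z = max(G, 0) / rho with
   rho = 6 lam |Z|^2 + eps, which is the cubic rho^2 (rho - eps) =
   6 lam |max(G, 0)|^2 solved by Cardano's formula.  All gradients are
   derivatives at 0 of quartic polynomials in t. *)

From mathcomp Require Import all_boot all_order all_algebra.
From mathcomp Require Import all_classical all_reals all_analysis.
From mathcomp Require Import ring lra.
Import Order.TTheory GRing.Theory Num.Theory.
Local Open Scope ring_scope.
Local Open Scope classical_set_scope.

Set Implicit Arguments.
Unset Strict Implicit.
Unset Printing Implicit Defensive.

Section Frobenius.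
Variables (R : realType) (p q : nat).
Implicit Types A B C W Z : 'M[R]_(p, q).

Lemma frobC A B : frob A B = frob B A.
Proof. by apply: eq_bigr => i _; apply: eq_bigr => j _; rewrite mulrC. Qed.

Lemma frobDl A B C : frob (A + B) C = frob A C + frob B C.
Proof.
rewrite /frob -big_split; apply: eq_bigr => i _.
by rewrite -big_split; apply: eq_bigr => j _; rewrite mxE mulrDl.
Qed.

Lemma frobZl k A B : frob (k *: A) B = k * frob A B.
Proof.
rewrite /frob mulr_sumr; apply: eq_bigr => i _.
by rewrite mulr_sumr; apply: eq_bigr => j _; rewrite mxE mulrA.
Qed.

Lemma frobNl A B : frob (- A) B = - frob A B.
Proof. by rewrite -scaleN1r frobZl mulN1r. Qed.

Lemma frobBl A B C : frob (A - B) C = frob A C - frob B C.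
Proof. by rewrite frobDl frobNl. Qed.

Lemma frobDr A B C : frob A (B + C) = frob A B + frob A C.
Proof. by rewrite frobC frobDl !(frobC A). Qed.

Lemma frobZr k A B : frob A (k *: B) = k * frob A B.
Proof. by rewrite frobC frobZl frobC. Qed.

Lemma frobBr A B C : frob A (B - C) = frob A B - frob A C.
Proof. by rewrite frobC frobBl !(frobC A). Qed.

Lemma frob_selfD A B : frob (A + B) (A + B) = frob A A + 2 * frob A B + frob B B.
Proof. by rewrite frobDl !frobDr (frobC B A); ring. Qed.

Lemma frob_selfB A B : frob (A - B) (A - B) = frob A A - 2 * frob A B + frob B B.
Proof. by rewrite frobBl !frobBr (frobC B A); ring. Qed.

Lemma frob_ge0 A : 0 <= frob A A.
Proof. by apply: sumr_ge0 => i _; apply: sumr_ge0 => j _; exact: sqr_ge0. Qed.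

Lemma fnorm_sqr A : fnorm A ^+ 2 = frob A A.
Proof. by rewrite sqr_sqrtr // frob_ge0. Qed.

Lemma fnorm_pow4 A : fnorm A ^+ 4 = frob A A ^+ 2.
Proof. by rewrite -fnorm_sqr -exprM. Qed.

Lemma frob_self_eq0 A : frob A A = 0 -> A = 0.
Proof.
move=> A0; apply/matrixP => i j; rewrite mxE.
have rowi := psumr_eq0P (fun i _ => sumr_ge0 _ (fun j _ => sqr_ge0 (A i j))) A0.
have /eqP := psumr_eq0P (fun j _ => sqr_ge0 (A i j)) (rowi i isT) (i := j) isT.
by rewrite sqrf_eq0 => /eqP.
Qed.

Lemma frob_delta A i j : frob A (delta_mx i j) = A i j.
Proof.
rewrite /frob (bigD1 i) //= (bigD1 j) //= !mxE !eqxx mulr1.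
rewrite big1 ?big1 ?addr0 // => [k ki|l lj]; last by rewrite mxE eqxx (negbTE lj) mulr0.
by apply: big1 => l _; rewrite mxE (negbTE ki) mulr0.
Qed.

Lemma frob_trmx A B : frob A^T B^T = frob A B.
Proof. by rewrite /frob exchange_big; apply: eq_bigr => i _; apply: eq_bigr => j _; rewrite !mxE. Qed.

Lemma frob_trace A B : frob A B = \tr (A^T *m B).
Proof.
rewrite /frob /mxtrace exchange_big; apply: eq_bigr => j _.
by rewrite mxE; apply: eq_bigr => i _; rewrite mxE.
Qed.

Lemma frob_sqr_convex W Z :
  4%:R * frob Z Z * frob Z (W - Z) <= frob W W ^+ 2 - frob Z Z ^+ 2.
Proof.
have := frob_ge0 (W - Z); rewrite frob_selfB frobBr (frobC Z W).
have := sqr_ge0 (frob W W - frob Z Z); have := frob_ge0 Z.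
move: (frob W W) (frob Z Z) (frob W Z) => w s x s0 sq d.
have : 0 <= s * (w - 2 * x + s) by exact: mulr_ge0.
nra.
Qed.

End Frobenius.

Section Gradients.
Variable R : realType.

Lemma frob_mulmx_trl p q s (A : 'M[R]_(p, q)) (B : 'M[R]_(p, s)) (C : 'M[R]_(s, q)) :
  frob A (B *m C) = frob (B^T *m A) C.
Proof. by rewrite !frob_trace trmx_mul trmxK mulmxA. Qed.

Lemma frob_mulmx_trr p q s (A : 'M[R]_(p, q)) (B : 'M[R]_(p, s)) (C : 'M[R]_(s, q)) :
  frob A (B *m C) = frob (A *m C^T) B.
Proof. by rewrite !frob_trace trmx_mul trmxK mulmxA mxtrace_mulC mulmxA. Qed.

Lemma derive1_quartic_at0 (f : R -> R) (a b c d e : R) :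
  (forall t, f t = a + b * t + t ^+ 2 * (c + t * (d + t * e))) ->
  derive1 f 0 = b.
Proof.
move=> fE.
pose P : {poly R} := a%:P + b%:P * 'X + 'X^2 * (c%:P + 'X * (d%:P + 'X * e%:P)).
have -> : f = horner P by apply/funext => t; rewrite fE /P !hornerE.
rewrite -derivE horner_coef0 coef_deriv /P !coefD coefC coefCM coefX coefXnM /=.
by rewrite mulr1 addr0 add0r.
Qed.

Variables (m r n : nat) (lam : R) (X : 'M[R]_(m, n)).

Lemma grad_phi1 (Ub : 'M[R]_(m, r)) (V : 'M[R]_(r, n)) :
  grad (fun U => phi1 U V) Ub = Ub.
Proof.
apply/matrixP => i j; rewrite mxE.
apply: (@derive1_quartic_at0 _ (2^-1 * frob Ub Ub) _ 2^-1 0 0) => t.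
rewrite /phi1 fnorm_sqr frob_selfD !frobZl !frobZr !frob_delta !mxE !eqxx /=.
by field.
Qed.

Lemma grad_phi2 (U : 'M[R]_(m, r)) (Vb : 'M[R]_(r, n)) :
  grad (phi2 lam U) Vb = (6%:R * lam * fnorm Vb ^+ 2 + eps lam U) *: Vb.
Proof.
apply/matrixP => i j; rewrite !mxE.
have sqE t : frob (Vb + t *: delta_mx i j) (Vb + t *: delta_mx i j)
             = frob Vb Vb + 2 * t * Vb i j + t ^+ 2.
  by rewrite frob_selfD !frobZl !frobZr !frob_delta !mxE !eqxx /=; ring.
pose k := 6%:R * lam / 4%:R.
apply: (@derive1_quartic_at0 _ (k * frob Vb Vb ^+ 2 + 2^-1 * eps lam U * frob Vb Vb) _
   (k * (4%:R * Vb i j ^+ 2 + 2 * frob Vb Vb) + 2^-1 * eps lam U)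
   (k * (4%:R * Vb i j)) k) => t.
rewrite /phi2 fnorm_pow4 !fnorm_sqr sqE /k.
by field.
Qed.

Lemma grad_fobj_U (Ub : 'M[R]_(m, r)) (V : 'M[R]_(r, n)) :
  grad (fun U => fobj lam X U V) Ub = Ub *m V *m V^T - X *m V^T.
Proof.
apply/matrixP => i j; rewrite mxE.
set E := delta_mx i j.
have resE t : X - (Ub + t *: E) *m V = (X - Ub *m V) - t *: (E *m V).
  by rewrite mulmxDl -scalemxAl opprD addrA.
apply: (@derive1_quartic_at0 _ (2^-1 * frob (X - Ub *m V) (X - Ub *m V)
          + lam / 2 * fnorm (1%:M - V *m V^T) ^+ 2) _
   (2^-1 * frob (E *m V) (E *m V)) 0 0) => t.
rewrite /fobj fnorm_sqr resE frob_selfB !frobZl !frobZr frob_mulmx_trr frob_delta.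
by rewrite mulmxBl !mxE; field.
Qed.

Lemma grad_fobj_V (U : 'M[R]_(m, r)) (Vb : 'M[R]_(r, n)) :
  grad (fobj lam X U) Vb =
  U^T *m U *m Vb - U^T *m X + (2 * lam) *: (Vb *m Vb^T *m Vb - Vb).
Proof.
apply/matrixP => i j; rewrite mxE.
set E := delta_mx i j.
set Res := X - U *m Vb.
set S := 1%:M - Vb *m Vb^T.
set K := E *m Vb^T + Vb *m E^T.
set F := E *m E^T.
have resE t : X - U *m (Vb + t *: E) = Res - t *: (U *m E).
  by rewrite mulmxDr -scalemxAr opprD addrA.
have gramE t : 1%:M - (Vb + t *: E) *m (Vb + t *: E)^T = S - (t *: K + t ^+ 2 *: F).
  rewrite linearD linearZ /= mulmxDl !mulmxDr -!scalemxAl -!scalemxAr scalerA.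
  by apply/matrixP => k l; rewrite /S /K /F !mxE; ring.
have fitE : frob Res (U *m E) = (U^T *m X - U^T *m U *m Vb) i j.
  by rewrite frob_mulmx_trl frob_delta /Res mulmxBr mulmxA.
have gramK : frob S K = 2 * (Vb - Vb *m Vb^T *m Vb) i j.
  have St : S^T = S by rewrite /S linearB /= trmx1 trmx_mul trmxK.
  have SE : frob S (E *m Vb^T) = (S *m Vb) i j.
    by rewrite frob_mulmx_trr trmxK frob_delta.
  have SEt : frob S (Vb *m E^T) = (S *m Vb) i j.
    by rewrite -frob_trmx trmx_mul trmxK St SE.
  by rewrite frobDr SE SEt /S mulmxBl mul1mx mulr_natl mulr2n.
clearbody Res S K F.
apply: (@derive1_quartic_at0 _ (2^-1 * frob Res Res + lam / 2 * frob S S) _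
   (2^-1 * frob (U *m E) (U *m E) + lam / 2 * (frob K K - 2 * frob S F))
   (lam / 2 * (2 * frob K F)) (lam / 2 * frob F F)) => t.
rewrite /fobj !fnorm_sqr resE gramE (frob_selfB Res) (frob_selfB S) frob_selfD.
rewrite (frobDr S) !frobZl !frobZr fitE gramK !mxE.
by field.
Qed.

End Gradients.

Section NonnegOrthant.
Variables (R : realType) (p q : nat).
Implicit Types (W Y Z g : 'M[R]_(p, q)) (psi : 'M[R]_(p, q) -> R).

Lemma mx_pos_nonneg Y : mx_nonneg (mx_pos Y).
Proof. by move=> i j; rewrite mxE le_max lexx orbT. Qed.

Lemma mx_pos_obtuse Y W k : 0 <= k -> mx_nonneg W ->
  0 <= frob (mx_pos Y - Y) (W - k *: mx_pos Y).
Proof.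
move=> k_ge0 W_ge0; apply: sumr_ge0 => i _; apply: sumr_ge0 => j _.
rewrite !mxE; have := W_ge0 i j; case: (leP (Y i j) 0) => Yij Wij.
  by apply: mulr_ge0; lra.
by rewrite subrr mul0r.
Qed.

Lemma bregman_three_point psi W Z Vb :
  bregman psi W Vb - bregman psi Z Vb
  = bregman psi W Z + frob (grad psi Z - grad psi Vb) (W - Z).
Proof. by rewrite /bregman !(frobBl, frobBr); ring. Qed.

Lemma argmin_nonneg_growth (obj : 'M[R]_(p, q) -> R) Z mu :
  0 < mu -> mx_nonneg Z ->
  (forall W, mx_nonneg W -> mu * frob (W - Z) (W - Z) <= obj W - obj Z) ->
  argmin_nonneg obj = [set Z].
Proof.
move=> mu_gt0 Z_ge0 growth; apply/seteqP; split=> [W [W_ge0 W_min] | _ ->] /=.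
  have dist0 : frob (W - Z) (W - Z) = 0.
    apply/eqP; rewrite eq_le frob_ge0 andbT -(ler_pM2l mu_gt0) mulr0.
    by have := growth W W_ge0; have := W_min Z Z_ge0; lra.
  by apply/eqP; rewrite -subr_eq0; apply/eqP/frob_self_eq0.
split=> // W W_ge0; have := growth W W_ge0.
by have := mulr_ge0 (ltW mu_gt0) (frob_ge0 (W - Z)); lra.
Qed.

Lemma argmin_nonneg_bregman psi g Vb Z L mu :
  0 < L -> 0 < mu -> mx_nonneg Z ->
  (forall W, mu * frob (W - Z) (W - Z) <= bregman psi W Z) ->
  (forall W, mx_nonneg W ->
     0 <= frob (grad psi Z - (grad psi Vb - L^-1 *: g)) (W - Z)) ->
  argmin_nonneg (fun W => frob g W + L * bregman psi W Vb) = [set Z].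
Proof.
move=> L_gt0 mu_gt0 Z_ge0 convex optimal.
apply: (argmin_nonneg_growth (mu := L * mu)) => // [|W W_ge0].
  exact: mulr_gt0.
have opt := optimal W W_ge0; have cvx := convex W.
have -> : frob g W + L * bregman psi W Vb - (frob g Z + L * bregman psi Z Vb)
    = frob g (W - Z) + L * (bregman psi W Z + frob (grad psi Z - grad psi Vb) (W - Z)).
  by rewrite -bregman_three_point frobBr; ring.
move: opt cvx; move: (W - Z) => D opt cvx; rewrite !frobBl frobZl in opt *.
have : 0 <= L * (frob (grad psi Z) D - (frob (grad psi Vb) D - L^-1 * frob g D)).
  exact: mulr_ge0 (ltW L_gt0) opt.
have : L * (mu * frob D D) <= L * bregman psi W Z by rewrite ler_pM2l.
have -> : L * (frob (grad psi Z) D - (frob (grad psi Vb) D - L^-1 * frob g D))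
    = L * (frob (grad psi Z) D - frob (grad psi Vb) D) + frob g D.
  by field; rewrite gt_eqF.
lra.
Qed.

End NonnegOrthant.

Section Cubic.
Variable R : realType.

Lemma cbrtK (x : R) : cbrt x ^+ 3 = x.
Proof.
have cube_root y : 0 <= y -> (y `^ 3%:R^-1) ^+ 3 = y.
  move=> y_ge0; rewrite -powR_mulrn ?powR_ge0 // -powRrM mulVf ?pnatr_eq0 //.
  exact: powRr1.
rewrite /cbrt; case: ifPn => [|x_lt0]; first exact: cube_root.
by rewrite exprNn -signr_odd mulN1r cube_root ?opprK // oppr_ge0 ltW // ltNge.
Qed.

Lemma vieta_cubic (a c u v : R) :
  u ^+ 3 + v ^+ 3 = c + 2 * a ^+ 3 / 27%:R -> u * v = a ^+ 2 / 9%:R ->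
  let s := a / 3%:R + u + v in s ^+ 2 * (s - a) = c.
Proof.
move=> sum3 prod s; apply/eqP; rewrite -subr_eq0; apply/eqP.
have -> : s ^+ 2 * (s - a) - c = (u ^+ 3 + v ^+ 3 - (c + 2 * a ^+ 3 / 27%:R))
   + 3%:R * (u + v) * (u * v - a ^+ 2 / 9%:R) by rewrite /s; field.
by rewrite sum3 prod !subrr mulr0 addr0.
Qed.

Definition cardano (a c : R) : R :=
  let Delta := c ^+ 2 + 4%:R / 27%:R * c * a ^+ 3 in
  a / 3%:R + cbrt ((c + Num.sqrt Delta) / 2 + a ^+ 3 / 27%:R)
           + cbrt ((c - Num.sqrt Delta) / 2 + a ^+ 3 / 27%:R).

Lemma cardanoP (a c : R) : 0 < a -> 0 <= c ->
  0 < cardano a c /\ cardano a c ^+ 2 * (cardano a c - a) = c.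
Proof.
move=> a_gt0 c_ge0; rewrite /cardano /=.
set Delta := c ^+ 2 + _; set P := (c + _) / 2 + _; set Q := (c - _) / 2 + _.
have Delta_ge0 : 0 <= Delta.
  by rewrite addr_ge0 ?sqr_ge0 // !mulr_ge0 // ?exprn_ge0 ?ltW // divr_ge0 ?ler0n.
have P_gt0 : 0 < P by rewrite ltr_wpDl ?divr_ge0 ?addr_ge0 ?sqrtr_ge0 ?divr_gt0 ?exprn_gt0.
have u_gt0 : 0 < cbrt P by rewrite -(exprn_odd_gt0 _ (isT : odd 3)) cbrtK.
have uv : cbrt P * cbrt Q = a ^+ 2 / 9%:R.
  have PQ : P * Q = (a ^+ 2 / 9%:R) ^+ 3.
    have -> : P * Q = (a ^+ 2 / 9%:R) ^+ 3 + (Delta - Num.sqrt Delta ^+ 2) / 4%:R.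
      by rewrite /P /Q /Delta; field.
    by rewrite sqr_sqrtr // subrr mul0r addr0.
  have a29_gt0 : 0 < a ^+ 2 / 9%:R by rewrite divr_gt0 ?exprn_gt0.
  have uv_gt0 : 0 < cbrt P * cbrt Q.
    by rewrite -(exprn_odd_gt0 _ (isT : odd 3)) exprMn !cbrtK PQ exprn_gt0.
  by apply/eqP; rewrite -(eqrXn2 (isT : 0 < 3)%N) ?ltW // exprMn !cbrtK PQ.
have v_gt0 : 0 < cbrt Q by rewrite -(pmulr_rgt0 _ u_gt0) uv divr_gt0 ?exprn_gt0.
split; first by rewrite !addr_gt0 ?divr_gt0.
apply: vieta_cubic uv.
by rewrite !cbrtK /P /Q; field.
Qed.

Lemma cubic_root_unique (a c s t : R) : 0 < a -> 0 <= c -> 0 < t ->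
  t ^+ 2 * (t - a) = c -> s ^+ 2 * (s - a) = c -> s = t \/ (c = 0 /\ s = 0).
Proof.
move=> a_gt0 c_ge0 t_gt0 tc sc.
have [c0|c_neq0] := eqVneq c 0.
  have ta : t = a.
    by move/eqP: tc; rewrite c0 mulf_eq0 sqrf_eq0 (gt_eqF t_gt0) subr_eq0 => /eqP.
  move/eqP: sc; rewrite c0 mulf_eq0 sqrf_eq0 subr_eq0 ta => /orP[/eqP|/eqP]; by auto.
have c_gt0 : 0 < c by rewrite lt_def c_neq0.
have gt_a x : x ^+ 2 * (x - a) = c -> a < x.
  move=> xc; rewrite ltNge; apply/negP => x_le_a.
  have : x ^+ 2 * (x - a) <= 0 by rewrite mulr_ge0_le0 ?sqr_ge0 ?subr_le0.
  by rewrite xc leNgt c_gt0.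
have ta := gt_a t tc; have sa := gt_a s sc.
have : (s - t) * (s * (s - a) + t * (t - a) + s * t) = 0.
  have -> : (s - t) * (s * (s - a) + t * (t - a) + s * t)
            = s ^+ 2 * (s - a) - t ^+ 2 * (t - a) by ring.
  by rewrite sc tc subrr.
move/eqP; rewrite mulf_eq0 subr_eq0 => /orP[/eqP|]; first by left.
by rewrite gt_eqF // !addr_gt0 // mulr_gt0 // ?subr_gt0 //; lra.
Qed.

End Cubic.

Section Subproblems.
Variables (R : realType) (m r n : nat) (lam : R) (X : 'M[R]_(m, n)).
Hypothesis lam_gt0 : 0 < lam.

Lemma eps_gt0 (U : 'M[R]_(m, r)) : 0 < eps lam U.
Proof. by rewrite /eps lt_max mulr_gt0 ?orbT. Qed.

Lemma bregman_phi1 (V : 'M[R]_(r, n)) (W Z : 'M[R]_(m, r)) :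
  bregman (fun U => phi1 U V) W Z = 2^-1 * frob (W - Z) (W - Z).
Proof. by rewrite /bregman grad_phi1 /phi1 !fnorm_sqr frob_selfB frobBr (frobC Z W); field. Qed.

Lemma bregman_phi2_ge (U : 'M[R]_(m, r)) (W Z : 'M[R]_(r, n)) :
  eps lam U / 2 * frob (W - Z) (W - Z) <= bregman (phi2 lam U) W Z.
Proof.
rewrite /bregman grad_phi2 /phi2 !fnorm_pow4 !fnorm_sqr frobZl.
have := ler_wpM2l (ltW lam_gt0) (frob_sqr_convex W Z).
rewrite frob_selfB !frobBr (frobC Z W); lra.
Qed.

Lemma argmin_U_step (Ub : 'M[R]_(m, r)) (V : 'M[R]_(r, n)) (L1 : R) : 0 < L1 ->
  argmin_nonneg (fun U => frob (grad (fun U' => fobj lam X U' V) Ub) U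
                          + L1 * bregman (fun U' => phi1 U' V) U Ub)
  = [set mx_pos (Ub - L1^-1 *: (Ub *m V *m V^T - X *m V^T))].
Proof.
move=> L1_gt0; apply: (argmin_nonneg_bregman (mu := 2^-1)) => //.
- exact: mx_pos_nonneg.
- by move=> W; rewrite bregman_phi1.
- move=> W W_ge0; rewrite !grad_phi1 grad_fobj_U -[X in W - X]scale1r.
  exact: mx_pos_obtuse ler01 W_ge0.
Qed.

Lemma argmin_V_step (U : 'M[R]_(m, r)) (Vb G : 'M[R]_(r, n)) (L2 rho : R) :
  0 < L2 -> 0 < rho ->
  G = grad (phi2 lam U) Vb - L2^-1 *: grad (fobj lam X U) Vb ->
  rho ^+ 2 * (rho - eps lam U) = 6%:R * lam * fnorm (mx_pos G) ^+ 2 ->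
  argmin_nonneg (fun V => frob (grad (fobj lam X U) Vb) V
                          + L2 * bregman (phi2 lam U) V Vb)
  = [set rho^-1 *: mx_pos G].
Proof.
move=> L2_gt0 rho_gt0 GE rhoE.
set Z := rho^-1 *: mx_pos G.
have rhoZ : 6%:R * lam * fnorm Z ^+ 2 + eps lam U = rho.
  have PE : fnorm (mx_pos G) ^+ 2 = rho ^+ 2 * (rho - eps lam U) / (6%:R * lam).
    by rewrite rhoE; field; rewrite gt_eqF.
  by rewrite fnorm_sqr frobZl frobZr -fnorm_sqr PE; field; rewrite !gt_eqF.
have gradZ : grad (phi2 lam U) Z = mx_pos G.
  by rewrite grad_phi2 rhoZ scalerA mulfV ?gt_eqF // scale1r.
apply: (argmin_nonneg_bregman (mu := eps lam U / 2)) => //.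
- by rewrite divr_gt0 ?eps_gt0.
- move=> i j; rewrite mxE mulr_ge0 ?invr_ge0 ?(ltW rho_gt0) //.
  exact: mx_pos_nonneg.
- by move=> W; apply: bregman_phi2_ge.
- move=> W W_ge0; rewrite gradZ -GE.
  by apply: mx_pos_obtuse W_ge0; rewrite invr_ge0 ltW.
Qed.

End Subproblems.

Theorem proposition5p2 (R : realType) (m r n : nat) (lam : R)
  (X : 'M[R]_(m, n)) :
  0 < lam ->
  (* (1) U-subproblem *)
  (forall (Ubar : 'M[R]_(m, r)) (V : 'M[R]_(r, n)) (L1 : R), 0 < L1 ->
     argmin_nonneg (fun U : 'M[R]_(m, r) =>
         frob (grad (fun U' => fobj lam X U' V) Ubar) U
         + L1 * bregman (fun U' => phi1 U' V) U Ubar)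
     = [set mx_pos (Ubar - L1^-1 *: (Ubar *m V *m V^T - X *m V^T))]) /\
  (* (2) V-subproblem *)
  (forall (Vbar : 'M[R]_(r, n)) (U : 'M[R]_(m, r)) (L2 : R), 0 < L2 ->
     let G : 'M[R]_(r, n) :=
       (6%:R * lam * fnorm Vbar ^+ 2 + eps lam U) *: Vbar
       - L2^-1 *: (U^T *m U *m Vbar - U^T *m X
                   + (2 * lam) *: (Vbar *m Vbar^T *m Vbar - Vbar)) in
     let a := eps lam U in
     let c := 6%:R * lam * fnorm (mx_pos G) ^+ 2 in
     let Delta := c ^+ 2 + 4%:R / 27%:R * c * a ^+ 3 in
     let rho := a / 3%:R
                + cbrt ((c + Num.sqrt Delta) / 2 + a ^+ 3 / 27%:R)
                + cbrt ((c - Num.sqrt Delta) / 2 + a ^+ 3 / 27%:R) in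
     grad (fun V' => phi2 lam U V') Vbar
       - L2^-1 *: grad (fun V' => fobj lam X U V') Vbar = G /\
     rho ^+ 2 * (rho - a) = c /\
     (forall s : R, s ^+ 2 * (s - a) = c -> s = rho \/ (c = 0 /\ s = 0)) /\
     argmin_nonneg (fun V : 'M[R]_(r, n) =>
         frob (grad (fun V' => fobj lam X U V') Vbar) V
         + L2 * bregman (fun V' => phi2 lam U V') V Vbar)
     = [set rho^-1 *: mx_pos G]).
Proof.
move=> lam_gt0; split=> [Ub V L1 L1_gt0 | Vb U L2 L2_gt0 G a c Delta rho].
  exact: argmin_U_step.
have GE : grad (phi2 lam U) Vb - L2^-1 *: grad (fobj lam X U) Vb = G.
  by rewrite grad_phi2 grad_fobj_V.
have a_gt0 : 0 < a by exact: eps_gt0.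
have c_ge0 : 0 <= c by rewrite mulr_ge0 ?sqr_ge0 // mulr_ge0 ?ler0n ?ltW.
have [rho_gt0 rhoE] : 0 < rho /\ rho ^+ 2 * (rho - a) = c := cardanoP a_gt0 c_ge0.
split; first exact: GE.
split; first exact: rhoE.
split; first by move=> s; exact: cubic_root_unique.
exact: argmin_V_step.
Qed.
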